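(* For every $w\in\mathfrak B$, $$\langle\nabla R(w),\,w-w^\star\rangle\ge\frac1{10}\|w-w^\star\|^2.$$
   Context: $\|w^\star\|=1$. $R$ is the population risk of learning a ReLU unit, whose gradient at $w\ne0$ is $\nabla R(w)=\frac12(w-w^\star)+\frac1{2\pi}(\theta w^\star-\hat w\sin\theta)$, where $\hat w=w/\|w\|$ and $\theta\in[0,\pi]$ is the angle between $w$ and $w^\star$ ($\cos\theta=\hat w^\top w^\star$). $\mathfrak B=\{w:w^\top w^\star\ge1/\sqrt d\}\cap\{w:\|w\|\le2\}$. *)

(* real vectors in R^d represented as functions nat -> R,
   of which only coordinates 0..d-1 are ever used. *)
From Stdlib Require Import Reals Lra.
Open Scope R_scope.

Definition vec := nat -> R.

Fixpoint sumn (n : nat) (f : nat -> R) : R :=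
  match n with
  | O => 0
  | S k => sumn k f + f k
  end.

Definition dot (d : nat) (u v : vec) : R := sumn d (fun i => u i * v i).
Definition norm (d : nat) (u : vec) : R := sqrt (dot d u u).

Definition vsub (u v : vec) : vec := fun i => u i - v i.

(* angle theta in [0, pi] between w and ws: cos theta = (w/|w|) . ws  (|ws| = 1) *)
Definition angle (d : nat) (w ws : vec) : R := acos (dot d w ws / norm d w).

(* gradient of the population risk of a ReLU unit, at w <> 0:
   grad R(w) = 1/2 (w - ws) + 1/(2 pi) (theta ws - (w/|w|) sin theta) *)
Definition gradR (d : nat) (ws w : vec) : vec :=
  let th := angle d w ws in
  fun i => / 2 * (w i - ws i)
           + / (2 * PI) * (th * ws i - (w i / norm d w) * sin th).

Definition inB (d : nat) (ws w : vec) : Prop :=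
  dot d w ws >= / sqrt (INR d) /\ norm d w <= 2.

(* Write [r = |w|], [c = cos θ], [s = sin θ], so that [w . w* = r c].  Expanding,
   [<∇R(w), w - w*> - |w - w*|^2 / 10] equals
   [(4π/5 (r^2 - 2 r c + 1) - (θ (1 - r c) + s (r - c))) / (2π)].
   The constraint [w . w* > 0] forces [θ <= π/2], where the Jordan-type bound
   [θ <= 5/2 sin θ] holds; splitting [r - c = t] with [r^2 - 2 r c + 1 = t^2 + s^2],
   the bracket is then a positive definite quadratic form in [(|t|, s)]. *)
From Stdlib Require Import Reals Lra Lia.
Open Scope R_scope.

Lemma sumn_ext n f g : (forall i, f i = g i) -> sumn n f = sumn n g.
Proof. intro H; induction n; simpl; [reflexivity | rewrite IHn, H; reflexivity]. Qed.

Lemma sumn_ge0 n f : (forall i, 0 <= f i) -> 0 <= sumn n f.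
Proof. intro H; induction n; simpl; [lra | specialize (H n); lra]. Qed.

Lemma sumn_quad_comb n (x y : vec) p q u :
  sumn n (fun i => p * (x i * x i) + q * (x i * y i) + u * (y i * y i))
  = p * sumn n (fun i => x i * x i) + q * sumn n (fun i => x i * y i)
    + u * sumn n (fun i => y i * y i).
Proof. induction n; simpl; [ring | rewrite IHn; ring]. Qed.

Lemma dot_self_ge0 d u : 0 <= dot d u u.
Proof. apply sumn_ge0; intro; apply Rle_0_sqr. Qed.

Lemma norm_sqr d u : norm d u ^ 2 = dot d u u.
Proof. unfold norm; rewrite <- Rsqr_pow2; apply Rsqr_sqrt, dot_self_ge0. Qed.

Lemma dot_self_unit d u : norm d u = 1 -> dot d u u = 1.
Proof. intro H; rewrite <- norm_sqr, H; ring. Qed.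

Lemma norm_vsub_sqr d u v :
  norm d (vsub u v) ^ 2 = dot d u u - 2 * dot d u v + dot d v v.
Proof.
rewrite norm_sqr; unfold dot, vsub.
rewrite (sumn_ext d _ (fun i => 1 * (u i * u i) + (-2) * (u i * v i) + 1 * (v i * v i)))
  by (intro; ring).
rewrite sumn_quad_comb; ring.
Qed.

Lemma dot_sqr_le_unit d u v : dot d v v = 1 -> dot d u v ^ 2 <= dot d u u.
Proof.
intro Hv; set (b := dot d u v).
assert (H := sumn_ge0 d (fun i => (u i - b * v i) * (u i - b * v i))
               ltac:(intro; apply Rle_0_sqr)).
rewrite (sumn_ext d _ (fun i => 1 * (u i * u i) + (-2 * b) * (u i * v i) + b ^ 2 * (v i * v i)))
  in H by (intro; ring).
rewrite sumn_quad_comb in H; fold (dot d u u) (dot d u v) (dot d v v) in H.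
rewrite Hv in H; fold b in H; nra.
Qed.

(* [1/sqrt 0 = 0] in Rocq, so in dimension 0 the constraint [w . w* >= 1/sqrt d]
   is vacuous; the unit vector [w*] rules that case out. *)
Lemma inB_dot_pos d ws w : dot d ws ws = 1 -> inB d ws w -> 0 < dot d w ws.
Proof.
intros Hv [HB _].
destruct d as [|d]; [unfold dot in Hv; simpl in Hv; lra |].
assert (0 < / sqrt (INR (S d))).
{ apply Rinv_0_lt_compat, sqrt_lt_R0, lt_0_INR; lia. }
lra.
Qed.

Lemma dot_gradR_vsub d ws w :
  norm d w <> 0 ->
  let r := norm d w in
  let th := angle d w ws in
  dot d (gradR d ws w) (vsub w ws)
  = (/ 2 - sin th / (2 * PI * r)) * dot d w w
    + (-1 + / (2 * PI) * (th + sin th / r)) * dot d w ws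
    + (/ 2 - th / (2 * PI)) * dot d ws ws.
Proof.
intros Hr r th.
assert (HPI := PI_RGT_0).
unfold dot, gradR, vsub; fold r th.
rewrite <- sumn_quad_comb; apply sumn_ext; intro i; field; split; [lra | exact Hr].
Qed.

Lemma acos_le_PI2 c : 0 <= c <= 1 -> acos c <= PI / 2.
Proof.
intro Hc.
assert (Hcos : cos (acos c) = c) by (apply cos_acos; lra).
assert (Hb := acos_bound c).
destruct (Rle_dec (acos c) (PI / 2)) as [h | h]; [exact h |].
exfalso; destruct (Req_dec (acos c) PI) as [e | e].
- rewrite e, cos_PI in Hcos; lra.
- assert (cos (acos c) < 0) by (apply cos_lt_0; lra); lra.
Qed.

Lemma sin_lb_eq a : sin_lb a = a - a ^ 3 / 6 + a ^ 5 / 120 - a ^ 7 / 5040.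
Proof.
unfold sin_lb, sin_approx, sin_term; simpl sum_f_R0; simpl Factorial.fact; simpl INR; field.
Qed.

(* From the degree-7 Taylor lower bound [sin_lb]: the remaining polynomial
   in [x = θ^2] stays nonnegative on [0, 4]. *)
Lemma le_5_2_sin th : 0 <= th <= 2 -> th <= 5 / 2 * sin th.
Proof.
intros [H0 H2].
assert (HPI := PI2_3_2).
destruct (SIN th H0 ltac:(lra)) as [Hl _]; rewrite sin_lb_eq in Hl.
set (x := th ^ 2).
assert (0 <= x) by (unfold x; nra).
assert (x <= 4) by (unfold x; nra).
assert (Hp : 0 <= 3 / 2 - 5 * x / 12 + x ^ 2 / 48 - x ^ 3 / 2016).
{ assert (0 <= (4 - x) * (16 - x)) by nra.
  assert (x ^ 3 <= 64) by (simpl; nra). nra. }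
assert (5 / 2 * (th - th ^ 3 / 6 + th ^ 5 / 120 - th ^ 7 / 5040) - th
        = th * (3 / 2 - 5 * x / 12 + x ^ 2 / 48 - x ^ 3 / 2016)) by (unfold x; field).
assert (0 <= th * (3 / 2 - 5 * x / 12 + x ^ 2 / 48 - x ^ 3 / 2016)) by (apply Rmult_le_pos; lra).
lra.
Qed.

Lemma abs_mul_le_quad t s : 5 / 2 * Rabs t * s <= 12 / 5 * t ^ 2 + 9 / 10 * s ^ 2.
Proof.
assert (Ha2 : Rabs t ^ 2 = t ^ 2)
  by (rewrite <- !Rsqr_pow2; symmetry; apply Rsqr_abs).
assert (0 <= (Rabs t - 25 / 48 * s) ^ 2) by apply pow2_ge_0.
assert (0 <= s ^ 2) by apply pow2_ge_0.
rewrite <- Ha2; nra.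
Qed.

Lemma angle_trig_bound th s c r :
  0 <= th <= PI / 2 -> th <= 5 / 2 * s -> 0 <= s -> 0 <= c -> s ^ 2 + c ^ 2 = 1 ->
  th * (1 - r * c) + s * (r - c) <= 4 / 5 * PI * (r ^ 2 - 2 * r * c + 1).
Proof.
intros [H0 H1] Hj Hs Hc Hsc.
assert (HPI := PI2_3_2).
pose (t := r - c).
assert (Ef : th * (1 - r * c) + s * (r - c) = th * s ^ 2 + (t * s - t * th * c)).
{ unfold t; replace (1 - r * c) with (s ^ 2 + c ^ 2 - r * c) by lra; ring. }
assert (ED : r ^ 2 - 2 * r * c + 1 = t ^ 2 + s ^ 2).
{ unfold t; replace 1 with (s ^ 2 + c ^ 2) at 1 by lra; ring. }
rewrite Ef, ED.
assert (Hc1 : c <= 1) by nra.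
assert (Hcross : t * s - t * th * c <= 5 / 2 * Rabs t * s).
{ destruct (Rle_dec 0 t) as [Ht | Ht].
  - rewrite Rabs_right by lra.
    assert (0 <= t * th * c) by (apply Rmult_le_pos; nra); nra.
  - rewrite Rabs_left by lra.
    assert (th * c <= th) by nra.
    assert (- t * (th * c) <= - t * (5 / 2 * s)) by (apply Rmult_le_compat_l; lra).
    nra. }
assert (th * s ^ 2 <= PI / 2 * s ^ 2) by (apply Rmult_le_compat_r; nra).
assert (H4 := abs_mul_le_quad t s).
assert (0 <= t ^ 2) by nra.
nra.
Qed.

Lemma relu_scalar_bound r c :
  0 < r -> 0 <= c <= 1 ->
  let th := acos c in
  (/ 2 - sin th / (2 * PI * r)) * r ^ 2
  + (-1 + / (2 * PI) * (th + sin th / r)) * (r * c)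
  + (/ 2 - th / (2 * PI)) * 1
  >= / 10 * (r ^ 2 - 2 * (r * c) + 1).
Proof.
intros Hr Hc th.
assert (HPI := PI2_3_2); assert (HPI4 := PI_4).
assert (Hb := acos_bound c); fold th in Hb.
assert (Hth := acos_le_PI2 c Hc); fold th in Hth.
assert (Hs : 0 <= sin th) by (apply sin_ge_0; lra).
assert (Hsc : sin th ^ 2 + c ^ 2 = 1).
{ rewrite <- (cos_acos c) by lra; fold th.
  rewrite <- !Rsqr_pow2; apply sin2_cos2. }
assert (Hkey := angle_trig_bound th (sin th) c r
                  (conj (proj1 Hb) Hth) (le_5_2_sin th ltac:(lra)) Hs (proj1 Hc) Hsc).
assert (E : (/ 2 - sin th / (2 * PI * r)) * r ^ 2
            + (-1 + / (2 * PI) * (th + sin th / r)) * (r * c) + (/ 2 - th / (2 * PI)) * 1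
            - / 10 * (r ^ 2 - 2 * (r * c) + 1)
            = / (2 * PI) * (4 / 5 * PI * (r ^ 2 - 2 * r * c + 1)
                            - (th * (1 - r * c) + sin th * (r - c))))
  by (field; split; lra).
assert (0 <= / (2 * PI) * (4 / 5 * PI * (r ^ 2 - 2 * r * c + 1)
                           - (th * (1 - r * c) + sin th * (r - c)))).
{ apply Rmult_le_pos; [left; apply Rinv_0_lt_compat |]; lra. }
lra.
Qed.

Theorem mainTheorem15 (d : nat) (ws w : vec) :
  norm d ws = 1 ->
  inB d ws w ->
  dot d (gradR d ws w) (vsub w ws) >= / 10 * (norm d (vsub w ws)) ^ 2.
Proof.
intros Hws HinB.
assert (HC := dot_self_unit d ws Hws).
assert (HB := inB_dot_pos d ws w HC HinB).
assert (HCS := dot_sqr_le_unit d w ws HC).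
set (r := norm d w).
assert (HrA : r ^ 2 = dot d w w) by apply norm_sqr.
assert (Hr : 0 < r) by (apply sqrt_lt_R0; nra).
set (c := dot d w ws / r).
assert (HBc : dot d w ws = r * c) by (unfold c; field; lra).
assert (Hc : 0 <= c <= 1).
{ split; [unfold c; apply Rlt_le, Rdiv_lt_0_compat; lra |].
  assert (dot d w ws <= r) by nra; nra. }
rewrite (dot_gradR_vsub d ws w ltac:(fold r; lra)), norm_vsub_sqr.
fold r; rewrite HC, <- HrA, HBc.
exact (relu_scalar_bound r c Hr Hc).
Qed.
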